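(* For every $n\ge 0$, the numbers of classes of each type satisfy \begin{align*} |\overline{t}_n^{\mathcal{S}_2}| &= |t_n^{\mathcal{S}_2}| - \sum_{m=0}^{n-1}\alpha_{n,m}|\overline{t}_m^{\mathcal{S}_2}|,\\ |\overline{t}_n^{\langle r\rangle}| &= |t_n^{\langle r\rangle}| - \sum_{m=0}^{n-1}\alpha_{n,m}|\overline{t}_m^{\langle r\rangle}|,\\ |\overline{t}_n^{\langle rc\rangle}| &= |t_n^{\langle rc\rangle}| - \sum_{m=0}^{n-1}\alpha_{n,m}|\overline{t}_m^{\langle rc\rangle}|,\\ |\overline{t}_n^{\langle c\rangle}| &= |t_n^{\langle c\rangle}| - \sum_{m=0}^{n-1}\Big[\binom{n}{m}|\overline{t}_m^{\langle c\rangle}| + \tfrac12\beta_{n,m}|\overline{t}_m^{\mathcal{S}_2}|\Big],\\ |\overline{t}_n^{\langle 1\rangle}| &= |t_n^{\langle 1\rangle}| - \sum_{m=0}^{n-1}\Big[\binom{n}{m}|\overline{t}_m^{\langle 1\rangle}| + \tfrac12\beta_{n,m}\big(|\overline{t}_m^{\langle r\rangle}|+|\overline{t}_m^{\langle rc\rangle}|\big)\Big]. \end{align*}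
   Context: Binary setting: $\mathcal{A}=\{0,1\}$, $L_2(n)$ is the set of all $f:\{0,1\}^n\to\{0,1\}$ and $\overline{L}_2(n)\subseteq L_2(n)$ the irreducible ones (those depending on every argument: for each index $j$ some change of only the $j$-th input letter changes the output). Let $c$ be the transposition $0\leftrightarrow1$ applied letterwise to words, and $r$ the reversal of words, $r(a_1\dots a_n)=a_n\dots a_1$. Operators on rules: $\hat{c}f(w)=c\,f(c\,w)$, $\hat{r}f(w)=f(rw)$, $\widehat{rc}=\hat r\hat c$. The group $\mathcal{S}_2=\{1,r,c,rc\}$ (Klein four-group) acts on $L_2(n)$ and on $\overline{L}_2(n)$ in this way; $[f]$ denotes the orbit of $f$ and $\mathrm{stab}(f)=\{\alpha\in\mathcal{S}_2\mid\hat\alpha f=f\}$ (constant on orbits since the group is abelian). For a subgroup $U\le\mathcal{S}_2$ (i.e. $\langle 1\rangle,\langle r\rangle,\langle c\rangle,\langle rc\rangle,\mathcal{S}_2$), put $t_n^U=\{[f]\in L_2(n)/\mathcal{S}_2\mid \mathrm{stab}(f)=U\}$ and $\overline{t}_n^U=\{[f]\in\overline{L}_2(n)/\mathcal{S}_2\mid\mathrm{stab}(f)=U\}$. For $n\ge m\ge0$: $\alpha_{n,m}=0$ if $n$ is even and $m$ is odd, and $\alpha_{n,m}=\binom{\lfloor n/2\rfloor}{\lfloor m/2\rfloor}$ otherwise; $\beta_{n,m}=\binom{n}{m}-\alpha_{n,m}$. *)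

From mathcomp Require Import all_boot all_order all_algebra.
Set Implicit Arguments. Unset Strict Implicit. Unset Printing Implicit Defensive.

(* Words of length n over {0,1} (false = 0, true = 1). *)
Definition word (n : nat) := {ffun 'I_n -> bool}.
Definition rule (n : nat) := {ffun word n -> bool}.

Definition wc n (w : word n) : word n := [ffun i => ~~ w i].
Definition wr n (w : word n) : word n := [ffun i => w (rev_ord i)].

Definition hat_c n (f : rule n) : rule n := [ffun w => ~~ f (wc w)].
Definition hat_r n (f : rule n) : rule n := [ffun w => f (wr w)].

(* The Klein four-group S_2 = {1, r, c, rc}: the element (b1, b2) stands for
   r^b1 c^b2. *)
Definition S2 := (bool * bool)%type.
Definition g1 : S2 := (false, false).
Definition gr : S2 := (true, false).
Definition gc : S2 := (false, true).
Definition grc : S2 := (true, true).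

Definition act n (a : S2) (f : rule n) : rule n :=
  let g := if a.2 then hat_c f else f in
  if a.1 then hat_r g else g.

Definition irreducible n (f : rule n) : bool :=
  [forall j : 'I_n, exists w : word n, exists w' : word n,
    [forall i : 'I_n, (i != j) ==> (w i == w' i)] && (f w != f w')].

Definition orbit n (f : rule n) : {set rule n} := [set act a f | a : S2].
Definition stab n (f : rule n) : {set S2} := [set a | act a f == f].

Definition U1 : {set S2} := [set g1].
Definition Ur : {set S2} := [set g1; gr].
Definition Uc : {set S2} := [set g1; gc].
Definition Urc : {set S2} := [set g1; grc].
Definition US2 : {set S2} := [set: S2].

Definition t n (U : {set S2}) : {set {set rule n}} :=
  [set orbit f | f in [set f : rule n | stab f == U]].
Definition tbar n (U : {set S2}) : {set {set rule n}} :=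
  [set orbit f | f in [set f : rule n | irreducible f && (stab f == U)]].

Definition alpha (n m : nat) : nat :=
  if ~~ odd n && odd m then 0 else 'C(n./2, m./2).
Definition beta (n m : nat) : rat := ('C(n, m))%:R - (alpha n m)%:R.

From Pilot Require Import Defs.
From mathcomp Require Import all_boot all_order all_algebra.
From mathcomp Require Import zify ring.
Import GRing.Theory Num.Theory.
Set Implicit Arguments. Unset Strict Implicit. Unset Printing Implicit Defensive.

(* A rule f on n letters is determined by its set S = ess f of essential
   variables and the irreducible rule on #|S| letters obtained by restricting f
   along the increasing enumeration of S.  This correspondence commutes with
   hat_c, and with hat_r when S is mirror-symmetric (rev_ord @: S = S).  So for
   symmetric S the rule and its irreducible core have the same stabilizer, while
   for non-symmetric S neither r nor rc can fix the rule and its stabilizer is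
   that of the core intersected with <c>.  Grouping the sets S by size, alpha n m
   of the 'C(n, m) subsets of size m are symmetric, which counts the rules with
   a given stabilizer U in terms of irreducible ones; dividing by the orbit size
   4 / #|U| turns this count into the recursions for classes. *)

Definition s2mul (a b : S2) : S2 := (a.1 (+) b.1, a.2 (+) b.2).

Section KleinAction.

Variable n : nat.
Implicit Types (f g : rule n) (a b : S2).

Lemma wcK : involutive (@wc n).
Proof. by move=> w; apply/ffunP=> i; rewrite !ffunE negbK. Qed.

Lemma wrK : involutive (@wr n).
Proof. by move=> w; apply/ffunP=> i; rewrite !ffunE rev_ordK. Qed.

Lemma hat_cK : involutive (@hat_c n).
Proof. by move=> f; apply/ffunP=> w; rewrite !ffunE negbK wcK. Qed.

Lemma hat_rK : involutive (@hat_r n).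
Proof. by move=> f; apply/ffunP=> w; rewrite !ffunE wrK. Qed.

Lemma hat_rC f : hat_r (hat_c f) = hat_c (hat_r f).
Proof. by apply/ffunP=> w; rewrite !ffunE; congr (~~ f _); apply/ffunP=> i; rewrite !ffunE. Qed.

Lemma actM a b f : act a (act b f) = act (s2mul a b) f.
Proof.
by case: a => [[] []]; case: b => [[] []]; rewrite /act /= ?(hat_rC, hat_cK, hat_rK).
Qed.

Lemma actK a : involutive (@act n a).
Proof. by move=> f; rewrite actM; case: a => [[] []]. Qed.

Lemma act_inj a : injective (@act n a).
Proof. exact: inv_inj (actK a). Qed.

Lemma actC a b f : act a (act b f) = act b (act a f).
Proof. by rewrite !actM; case: a => [[] []]; case: b => [[] []]. Qed.

Lemma stab_act a f : stab (act a f) = stab f.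
Proof. by apply/setP=> b; rewrite !inE actC (inj_eq (@act_inj a)). Qed.

Lemma orbit_refl f : f \in Defs.orbit f.
Proof. by apply/imsetP; exists g1. Qed.

Lemma orbit_eq f g : f \in Defs.orbit g -> Defs.orbit f = Defs.orbit g.
Proof.
case/imsetP=> a _ ->; apply/setP=> h; apply/imsetP/imsetP=> -[b _ ->].
  by exists (s2mul b a); rewrite ?actM.
by exists (s2mul b a); rewrite // actM; congr act; case: a b => [[] []] [[] []].
Qed.

Lemma card_orbit_stab f : #|Defs.orbit f| * #|stab f| = 4.
Proof.
have -> : 4 = #|[set: S2]| by rewrite cardsT card_prod card_bool.
rewrite -[RHS]sum1_card (partition_big_imset (fun a => act a f)) /=.
rewrite (_ : [set act a f | a in [set: S2]] = Defs.orbit f); last first.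
  by apply/setP=> h; apply/imsetP/imsetP=> -[a _ ->]; exists a.
rewrite -sum_nat_const; apply: eq_bigr => _ /imsetP [b _ ->].
rewrite sum1_card -(card_imset (stab f) (inv_inj (_ : involutive (s2mul b)))); last first.
  by case: b => [[] []] [[] []].
apply: eq_card => a; rewrite [RHS]unfold_in /= in_setT /=.
apply/imsetP/eqP => [[c]|E].
  by rewrite inE => /eqP E ->; rewrite -actM E.
exists (s2mul b a); last by case: a b {E} => [[] []] [[] []].
by rewrite inE -actM E actK.
Qed.

Lemma card_orbits (A : {set rule n}) (U : {set S2}) :
  (forall a f, f \in A -> act a f \in A) -> {in A, forall f, stab f = U} ->
  #|[set Defs.orbit f | f in A]| * 4 = #|A| * #|U|.
Proof.
move=> A_act A_stab.
rewrite -[#|A|]sum1_card (partition_big_imset (@Defs.orbit n)) big_distrl /=.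
rewrite -sum_nat_const; apply/esym/eq_bigr => _ /imsetP [g gA ->].
rewrite -(card_orbit_stab g) (A_stab g gA) sum1_card; congr (_ * _).
apply: eq_card => f; rewrite [LHS]unfold_in /=.
apply/andP/idP => [[_ /eqP <-]|fo]; first exact: orbit_refl.
by split; [case/imsetP: fo => a _ ->; apply: A_act | rewrite (orbit_eq fo)].
Qed.

Lemma stab1 f : g1 \in stab f.
Proof. by rewrite inE. Qed.

Lemma stabM f a b : a \in stab f -> b \in stab f -> s2mul a b \in stab f.
Proof. by rewrite !inE => /eqP Ea /eqP Eb; rewrite -actM Eb Ea. Qed.

End KleinAction.

(* Equalities between concrete subsets of S2 are decided through these bits. *)
Definition s2bits (V : {set S2}) := (g1 \in V, gr \in V, gc \in V, grc \in V).

Lemma s2bits_inj : injective s2bits.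
Proof. by move=> A B [] *; apply/setP => -[[] []]. Qed.

Lemma eq_setS2 (A B : {set S2}) : (A == B) = (s2bits A == s2bits B).
Proof. exact/esym/inj_eq/s2bits_inj. Qed.

Definition subgroups : seq {set S2} := [:: U1; Ur; Uc; Urc; US2].

Lemma card_subgroups :
  [/\ #|U1| = 1, #|Ur| = 2, #|Uc| = 2, #|Urc| = 2 & #|US2| = 4]%N.
Proof. by rewrite cards1 !cards2 cardsT card_prod card_bool. Qed.

Lemma meet_Uc :
  [/\ U1 :&: Uc = U1, Ur :&: Uc = U1, Uc :&: Uc = Uc, Urc :&: Uc = U1 & US2 :&: Uc = Uc].
Proof. by split; apply/setP => -[[] []]; rewrite !inE. Qed.

Lemma s2bits_subgroups :
  [/\ s2bits U1 = (true, false, false, false), s2bits Ur = (true, true, false, false),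
      s2bits Uc = (true, false, true, false), s2bits Urc = (true, false, false, true)
    & s2bits US2 = (true, true, true, true)].
Proof. by split; rewrite /s2bits !inE. Qed.

Lemma uniq_subgroups : uniq subgroups.
Proof. by rewrite /= !inE !eq_setS2 /s2bits !inE. Qed.

Lemma stab_subgroup n (f : rule n) : stab f \in subgroups.
Proof.
have S1 := stab1 f.
rewrite !inE !eq_setS2 /s2bits S1.
case Sr: (gr \in stab f); case Sc: (gc \in stab f); case Src: (grc \in stab f);
  rewrite !inE //.
- by move: (stabM Sr Sc); rewrite Src.
- by move: (stabM Sr Src); rewrite Sc.
- by move: (stabM Sc Src); rewrite Sr.
Qed.

Lemma subgroups_card_gt0 V : V \in subgroups -> 0 < #|V|.
Proof.
move=> V_sub; apply/card_gt0P; exists g1.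
by move: V_sub; rewrite !inE => /or4P [| | | /orP []] /eqP ->; rewrite !inE.
Qed.

Lemma card_stab_pred n (p : pred (rule n)) (P : pred {set S2}) :
  #|[set f | p f && P (stab f)]| =
  \sum_(V <- subgroups | P V) #|[set f | p f && (stab f == V)]|.
Proof.
rewrite -big_filter big_uniq ?filter_uniq ?uniq_subgroups //.
rewrite -sum1_card (partition_big (@stab n) (fun V => V \in filter P subgroups)) => [|f].
  apply: eq_bigr => V; rewrite mem_filter => /andP [PV _].
  rewrite sum1_card; apply: eq_card => f; rewrite [LHS]unfold_in !inE -andbA.
  by case: eqP => [->|]; rewrite ?PV ?andbF.
by rewrite inE => /andP [_ PS]; rewrite mem_filter PS stab_subgroup.
Qed.

Lemma mem_rev_imset n (T : {set 'I_n}) (j : 'I_n) :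
  (j \in @rev_ord n @: T) = (rev_ord j \in T).
Proof. by rewrite -{1}(rev_ordK j) (mem_imset _ _ (@rev_ord_inj n)). Qed.

Definition rev_sym n (S : {set 'I_n}) := @rev_ord n @: S == S.

Lemma rev_symP n (S : {set 'I_n}) :
  reflect (forall j, (rev_ord j \in S) = (j \in S)) (rev_sym S).
Proof.
apply: (iffP eqP) => [symS j | symS]; first by rewrite -mem_rev_imset symS.
by apply/setP => j; rewrite mem_rev_imset symS.
Qed.

Section EssentialVariables.

Variable n : nat.
Implicit Types (f : rule n) (w : word n) (i j : 'I_n).

Definition flip j w : word n := [ffun i => if i == j then ~~ w i else w i].

Definition ess f : {set 'I_n} := [set j | [exists w, f (flip j w) != f w]].

Lemma mem_ess f j : (j \in ess f) =
  [exists w : word n, exists w' : word n,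
     [forall i, (i != j) ==> (w i == w' i)] && (f w != f w')].
Proof.
rewrite inE; apply/existsP/existsP => [[w Dw]|[w /existsP [w' /andP [/forallP agree Dww']]]].
  exists w; apply/existsP; exists (flip j w); rewrite eq_sym Dw andbT.
  by apply/forallP => i; apply/implyP => ij; rewrite ffunE (negbTE ij).
have agree_off i : i != j -> w' i = w i by move=> ij; apply/esym/eqP/(implyP (agree i)).
exists w; suff -> : flip j w = w' by rewrite eq_sym.
apply/ffunP => i; rewrite ffunE; case: (eqVneq i j) => [-> | /agree_off //].
(* w and w' differ somewhere, hence at j *)
case: (eqVneq (w' j) (w j)) => [Ej | /negPf]; last by case: (w j) (w' j) => [] [].
suff Eww' : w = w' by rewrite Eww' eqxx in Dww'.
by apply/ffunP => k; case: (eqVneq k j) => [-> | /agree_off].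
Qed.

Lemma irreducibleE f : irreducible f = (ess f == [set: 'I_n]).
Proof.
apply/forallP/eqP => [irr_f | ess_f j]; last by rewrite -mem_ess ess_f inE.
by apply/setP => j; rewrite mem_ess in_setT irr_f.
Qed.

Lemma flip_inessential f j w : j \notin ess f -> f (flip j w) = f w.
Proof. by rewrite inE negb_exists => /forallP /(_ w) /negPn /eqP. Qed.

Lemma eq_on_ess f w w' : {in ess f, w =1 w'} -> f w = f w'.
Proof.
move Ek : #|[set i | w i != w' i]| => k; elim: k w Ek => [|k IHk] w Ek agree.
  congr (f _); apply/ffunP => i; apply/eqP/negPn/negP => Dwi.
  by move/cards0_eq/setP/(_ i): Ek; rewrite !inE Dwi.
have [j] : exists j, j \in [set i | w i != w' i] by apply/card_gt0P; rewrite Ek.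
rewrite inE => Dwj.
have j_iness : j \notin ess f by apply: contra Dwj => /agree ->.
rewrite -(flip_inessential w j_iness); apply: IHk => [|i i_ess].
  have -> : [set i | flip j w i != w' i] = [set i | w i != w' i] :\ j.
    apply/setP => i; rewrite !inE ffunE; case: (eqVneq i j) => [-> | //].
    by move: Dwj; case: (w j) (w' j) => [] [].
  by move: Ek; rewrite (cardsD1 j) inE Dwj => -[].
rewrite ffunE; case: (eqVneq i j) => [Eij | _]; last exact: agree.
by move: i_ess; rewrite Eij (negPf j_iness).
Qed.

Lemma wc_flip j w : wc (flip j w) = flip j (wc w).
Proof. by apply/ffunP => i; rewrite !ffunE; case: eqP. Qed.

Lemma wr_flip j w : wr (flip j w) = flip (rev_ord j) (wr w).
Proof.
apply/ffunP => i; rewrite !ffunE; congr (if _ then _ else _).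
by apply/eqP/eqP => [<- | ->]; rewrite rev_ordK.
Qed.

Lemma ess_hat_c f : ess (hat_c f) = ess f.
Proof.
apply/setP => j; rewrite !inE; apply/existsP/existsP => -[w].
  by rewrite !ffunE wc_flip (inj_eq negb_inj); exists (wc w).
by exists (wc w); rewrite !ffunE wc_flip (inj_eq negb_inj) wcK.
Qed.

Lemma ess_hat_r f : ess (hat_r f) = @rev_ord n @: ess f.
Proof.
apply/setP => j; rewrite mem_rev_imset !inE.
apply/existsP/existsP => -[w].
  by rewrite !ffunE wr_flip; exists (wr w).
by exists (wr w); rewrite !ffunE wr_flip wrK.
Qed.

End EssentialVariables.

Lemma ess_act n a (f : rule n) :
  ess (act a f) = if a.1 then @rev_ord n @: ess f else ess f.
Proof. by case: a => [[] []]; rewrite /act /= ?ess_hat_r ?ess_hat_c. Qed.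

Lemma irreducible_act n a (f : rule n) : irreducible (act a f) = irreducible f.
Proof.
rewrite !irreducibleE ess_act; case: a.1 => //.
by rewrite !eqEcard !subsetT card_imset //; exact: rev_ord_inj.
Qed.

Section Embedding.

Variables (m n : nat) (s : 'I_m -> 'I_n).
Hypothesis s_inj : injective s.
Implicit Types (g : rule m) (f : rule n).

Definition restr (w : word n) : word m := [ffun i => w (s i)].

Definition extend (v : word m) : word n :=
  [ffun j => if [pick i | s i == j] is Some i then v i else false].

Definition embed g : rule n := [ffun w => g (restr w)].

Lemma extendK : cancel extend restr.
Proof.
move=> v; apply/ffunP => i; rewrite !ffunE.
by case: pickP => [i' /eqP /s_inj -> // | /(_ i)]; rewrite eqxx.
Qed.

Lemma restr_flip i w : restr (flip (s i) w) = flip i (restr w).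
Proof. by apply/ffunP => k; rewrite !ffunE (inj_eq s_inj). Qed.

Lemma restr_flip_out j w : j \notin s @: setT -> restr (flip j w) = restr w.
Proof.
move=> j_out; apply/ffunP => k; rewrite !ffunE; case: eqP => // Ekj.
by rewrite -Ekj imset_f in j_out.
Qed.

Lemma ess_embed g : ess (embed g) = s @: ess g.
Proof.
apply/setP => j; case: (boolP (j \in s @: setT)) => [/imsetP [i _ ->] | j_out].
  rewrite (mem_imset _ _ s_inj) !inE; apply/existsP/existsP => -[w].
    by rewrite !ffunE restr_flip; exists (restr w).
  by exists (extend w); rewrite !ffunE restr_flip extendK.
apply/idP/idP => [|/imsetP [i _ Ej]]; last by rewrite Ej imset_f in j_out.
by rewrite inE => /existsP [w]; rewrite !ffunE restr_flip_out // eqxx.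
Qed.

Lemma embed_inj : injective embed.
Proof.
move=> g g' /ffunP E; apply/ffunP => v.
by have := E (extend v); rewrite !ffunE extendK.
Qed.

Lemma embed_extend f : ess f \subset s @: setT -> f = embed [ffun v => f (extend v)].
Proof.
move=> ess_f; apply/ffunP => w; rewrite !ffunE; apply: eq_on_ess => j /(subsetP ess_f).
case/imsetP => i _ ->; rewrite !ffunE.
by case: pickP => [i' /eqP /s_inj -> | /(_ i)]; rewrite ?ffunE ?eqxx.
Qed.

Lemma embed_hat_c g : embed (hat_c g) = hat_c (embed g).
Proof.
by apply/ffunP => w; rewrite !ffunE; congr (~~ g _); apply/ffunP => i; rewrite !ffunE.
Qed.

Lemma embed_hat_r g : {morph s : i / rev_ord i} -> embed (hat_r g) = hat_r (embed g).
Proof.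
move=> s_rev; apply/ffunP => w; rewrite !ffunE; congr (g _).
by apply/ffunP => i; rewrite !ffunE s_rev.
Qed.

End Embedding.

(* The increasing enumeration of S. *)
Definition incl n (S : {set 'I_n}) : 'I_#|S| -> 'I_n := @enum_val _ (mem S).
Arguments incl {n} S.

Lemma incl_inj n (S : {set 'I_n}) : injective (incl S).
Proof. exact: enum_val_inj. Qed.

Lemma incl_range n (S : {set 'I_n}) : incl S @: setT = S.
Proof.
apply/setP => j; apply/imsetP/idP => [[i _ ->] | jS]; first exact: enum_valP.
by exists (enum_rank_in jS j); rewrite // /incl enum_rankK_in.
Qed.

Lemma sorted_enum_set n (S : {set 'I_n}) : sorted (fun i j : 'I_n => i < j) (enum S).
Proof.
have sub : subseq (enum S) (enum 'I_n) by rewrite enumT; exact: filter_subseq.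
apply: subseq_sorted sub _ => [i j k | ]; first exact: ltn_trans.
by have := iota_ltn_sorted 0 n; rewrite -val_enum_ord sorted_map.
Qed.

Lemma incl_rev n (S : {set 'I_n}) : rev_sym S -> {morph incl S : i / rev_ord i}.
Proof.
move=> /rev_symP symS i; set s := enum S.
have lt_trans : transitive (fun i j : 'I_n => i < j) by move=> ? ? ?; exact: ltn_trans.
have rev_s : map (@rev_ord n) (rev s) = s.
  apply: (irr_sorted_eq lt_trans) => [x | | | x]; first exact: ltnn.
  - rewrite sorted_map rev_sorted; apply: sub_sorted (sorted_enum_set S) => x y /=.
    by have := ltn_ord y; lia.
  - exact: sorted_enum_set.
  by rewrite -[x in LHS]rev_ordK (mem_map (@rev_ord_inj n)) mem_rev !mem_enum symS.
have size_s : size s = #|S| by rewrite cardE.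
rewrite /incl !(enum_val_nth (incl S i)) -/s -[in LHS]rev_s.
rewrite (nth_map (incl S i)) ?size_rev ?size_s // nth_rev ?size_s //.
by congr (rev_ord (nth _ _ _)); rewrite /= subnSK // subKn // ltnW.
Qed.

Definition irr_stab n (U : {set S2}) : {set rule n} :=
  [set g | irreducible g && (stab g == U)].

Section PrescribedEssentialSet.

Variables (n : nat) (S : {set 'I_n}).
Implicit Types (g : rule #|S|) (U : {set S2}).

Local Notation embedS := (embed (incl S)).

Lemma ess_embed_incl g : irreducible g -> ess (embedS g) = S.
Proof.
rewrite irreducibleE => /eqP ess_g.
by rewrite ess_embed ?ess_g ?incl_range //; exact: incl_inj.
Qed.

Lemma ess_eq_embed : [set f : rule n | ess f == S] = embedS @: [set g | irreducible g].
Proof.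
apply/setP => f; rewrite inE; apply/eqP/imsetP => [ess_f | [g]]; last first.
  by rewrite inE => /ess_embed_incl ess_g ->.
have ess_sub : ess f \subset incl S @: setT by rewrite incl_range ess_f.
have Ef := embed_extend (@incl_inj n S) ess_sub.
exists [ffun v => f (extend (incl S) v)] => //; rewrite inE irreducibleE.
apply/eqP/(imset_inj (@incl_inj n S)).
by rewrite -ess_embed -?Ef ?ess_f ?incl_range //; exact: incl_inj.
Qed.

Lemma act_embed_incl a g : ~~ a.1 || rev_sym S -> act a (embedS g) = embedS (act a g).
Proof.
case: a => [[] c] /= symS; rewrite /act /=; last by case: c; rewrite ?embed_hat_c.
by case: c; rewrite ?embed_hat_c (embed_hat_r _ (incl_rev symS)) ?embed_hat_c.
Qed.

Lemma stab_embed_sym g : rev_sym S -> stab (embedS g) = stab g.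
Proof.
move=> symS; apply/setP => a; rewrite !inE act_embed_incl ?symS ?orbT //.
by rewrite (inj_eq (embed_inj (@incl_inj n S))).
Qed.

Lemma stab_embed_asym g : ~~ rev_sym S -> irreducible g -> stab (embedS g) = stab g :&: Uc.
Proof.
move=> asymS irr_g; apply/setP => -[[] c]; rewrite !inE /=.
  (* a reversal would map the essential set S onto its mirror image *)
  rewrite andbF; apply: contraNF asymS => /eqP/(congr1 (@ess n)).
  by rewrite ess_act /= ess_embed_incl // /rev_sym => ->.
rewrite act_embed_incl // (inj_eq (embed_inj (@incl_inj n S))).
by case: c; rewrite /= ?orbT ?andbT.
Qed.

Lemma card_ess_stab U :
  #|[set f : rule n | (ess f == S) && (stab f == U)]| =
  #|[set g | irreducible g && (stab (embedS g) == U)]|.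
Proof.
rewrite -(card_imset _ (embed_inj (@incl_inj n S))); apply: eq_card => f.
rewrite inE; apply/andP/imsetP => [[ess_f stab_f] | [g]].
  have : f \in [set f : rule n | ess f == S] by rewrite inE.
  rewrite ess_eq_embed => /imsetP [g]; rewrite inE => irr_g Ef.
  by exists g => //; rewrite inE irr_g -Ef.
by rewrite inE => /andP [irr_g stab_g] ->; rewrite ess_embed_incl.
Qed.

Lemma card_ess_stab_sym U : rev_sym S ->
  #|[set f : rule n | (ess f == S) && (stab f == U)]| = #|irr_stab #|S| U|.
Proof.
by move=> symS; rewrite card_ess_stab; apply: eq_card => g; rewrite !inE stab_embed_sym.
Qed.

Lemma card_ess_stab_asym U : ~~ rev_sym S ->
  #|[set f : rule n | (ess f == S) && (stab f == U)]| =
  #|[set g : rule #|S| | irreducible g && (stab g :&: Uc == U)]|.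
Proof.
move=> asymS; rewrite card_ess_stab; apply: eq_card => g; rewrite !inE.
by case: (boolP (irreducible g)) => //= irr_g; rewrite stab_embed_asym.
Qed.

End PrescribedEssentialSet.

Lemma cardsU_disjoint (T : finType) (A B : {set T}) :
  [disjoint A & B] -> #|A :|: B| = #|A| + #|B|.
Proof. by move=> disj; apply/eqP; rewrite (leq_card_setU A B).2. Qed.

Section SymmetricSubsets.

Variable n : nat.
Implicit Types (S T M : {set 'I_n}) (j : 'I_n).

(* j \in lower iff j < rev_ord j, and j \in middle iff rev_ord j = j. *)
Definition lower : {set 'I_n} := [set j : 'I_n | (j.*2).+1 < n].
Definition middle : {set 'I_n} := [set j : 'I_n | (j.*2).+1 == n].
Definition rev_closure T := T :|: @rev_ord n @: T.

Lemma lower_rev j : j \in lower -> rev_ord j \notin lower.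
Proof. by rewrite !inE /=; have := ltn_ord j; lia. Qed.

Lemma middle_rev j : j \in middle -> rev_ord j = j.
Proof. by rewrite inE => /eqP Ej; apply: val_inj => /=; lia. Qed.

Lemma mem_middle_rev j : (rev_ord j \in middle) = (j \in middle).
Proof. by rewrite !inE /=; apply/eqP/eqP; have := ltn_ord j; lia. Qed.

Lemma lower_middle j : j \in lower -> j \notin middle.
Proof. by rewrite !inE; lia. Qed.

Lemma lower_cover j : [|| j \in lower, rev_ord j \in lower | j \in middle].
Proof. by rewrite !inE /=; have := ltn_ord j; lia. Qed.

Lemma card_middle : #|middle| = odd n.
Proof.
have := odd_double_half n; case: (odd n) => /= En.
  have lt_half : n./2 < n by lia.
  suff -> : middle = [set Ordinal lt_half] by rewrite cards1.
  apply/setP => j; rewrite !inE.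
  by apply/eqP/eqP => [Ej | ->]; first apply: val_inj; rewrite /=; lia.
by apply/eqP; rewrite cards_eq0; apply/eqP/setP => j; rewrite !inE; apply/eqP; lia.
Qed.

Lemma card_rev_closureU T M : T \subset lower -> M \subset middle ->
  #|rev_closure T :|: M| = (#|T|).*2 + #|M|.
Proof.
move=> /subsetP T_low /subsetP M_mid.
have disj_TM : [disjoint rev_closure T & M].
  apply/pred0P => j /=; apply/negbTE/andP; rewrite !inE mem_rev_imset.
  case=> /orP [/T_low j_low | /T_low rj_low] /M_mid; last rewrite -mem_middle_rev.
    exact/negP/lower_middle.
  exact/negP/lower_middle.
have disj_T : [disjoint T & @rev_ord n @: T].
  apply/pred0P => j /=; apply/negbTE/andP; rewrite mem_rev_imset.
  by case=> /T_low /lower_rev /negP + /T_low.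
rewrite !cardsU_disjoint // card_imset ?addnn //; exact: rev_ord_inj.
Qed.

Lemma card_lower : #|lower| = n./2.
Proof.
have cover : rev_closure lower :|: middle = [set: 'I_n].
  apply/setP => j; rewrite !in_setU mem_rev_imset in_setT -orbA.
  exact: lower_cover.
have := card_rev_closureU (subxx lower) (subxx middle).
by rewrite cover cardsT card_ord card_middle; have := odd_double_half n; lia.
Qed.

Lemma rev_closureUK T M : T \subset lower -> M \subset middle ->
  (rev_closure T :|: M) :&: lower = T.
Proof.
move=> /subsetP T_low /subsetP M_mid; apply/setP => j.
rewrite in_setI !in_setU mem_rev_imset.
case: (boolP (j \in T)) => [/T_low -> // | jT] /=; apply/negbTE.
apply/andP => -[/orP [/T_low rj_low | /M_mid j_mid] j_low].
  by have := lower_rev j_low; rewrite rj_low.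
by have := lower_middle j_low; rewrite j_mid.
Qed.

Lemma rev_sym_closureU T M : M \subset middle -> rev_sym (rev_closure T :|: M).
Proof.
move=> /subsetP M_mid; apply/rev_symP => j; rewrite !in_setU !mem_rev_imset rev_ordK.
case: (boolP (j \in middle)) => [/middle_rev -> // | j_mid].
have rj_mid : rev_ord j \notin middle by rewrite mem_middle_rev.
by rewrite (contraNF (@M_mid j) j_mid) (contraNF (@M_mid _) rj_mid) !orbF orbC.
Qed.

Lemma rev_sym_decomp S : rev_sym S -> S = rev_closure (S :&: lower) :|: (S :&: middle).
Proof.
move=> /rev_symP symS; apply/setP => j.
rewrite !in_setU !in_setI mem_rev_imset in_setI symS.
by rewrite -!andb_orr -orbA lower_cover andbT.
Qed.

Lemma card_rev_sym (m : nat) :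
  #|[set S : {set 'I_n} | (#|S| == m) && rev_sym S]| = alpha n m.
Proof.
have card_sym S : rev_sym S -> #|S| = (#|S :&: lower|).*2 + #|S :&: middle|.
  by move/rev_sym_decomp => {1}->; rewrite card_rev_closureU ?subsetIr.
have card_mid S : #|S :&: middle| <= odd n by rewrite -card_middle subset_leq_card ?subsetIr.
have odd_card S : rev_sym S -> odd #|S| = odd #|S :&: middle|.
  by move/card_sym ->; rewrite oddD odd_double.
rewrite /alpha; case: ifPn => [/andP [even_n odd_m] | parity].
  apply/eqP; rewrite cards_eq0; apply/eqP/setP => S; rewrite !inE.
  apply/negbTE/andP => -[/eqP sizeS /odd_card]; rewrite sizeS odd_m.
  by have := card_mid S; rewrite (negbTE even_n) leqn0 => /eqP ->.
(* A symmetric set is its lower part mirrored, plus the middle point exactly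
   when its size is odd. *)
pose M := if odd m then middle else set0.
have M_mid : M \subset middle by rewrite /M; case: ifP; rewrite ?sub0set.
have card_M : #|M| = odd m.
  rewrite /M; case: ifPn => [odd_m | _]; last exact: cards0.
  by rewrite card_middle; move: parity; rewrite odd_m andbT negbK => ->.
rewrite -card_lower -cards_draws -[RHS](card_in_imset (f := fun T => rev_closure T :|: M)).
  apply: eq_card => S; rewrite inE; apply/andP/imsetP => [[/eqP sizeS symS] | ].
    have card_S_mid : #|S :&: middle| = odd m.
      rewrite -sizeS odd_card //.
      by move: (leq_trans (card_mid S) (leq_b1 _)); case: #|_| => [|[|]].
    have S_mid : S :&: middle = M.
      rewrite /M; case: ifP => odd_m; last by apply: cards0_eq; rewrite card_S_mid odd_m.
      by apply/eqP; rewrite eqEcard subsetIr card_middle card_S_mid odd_m leq_b1.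
    have card_S_low : #|S :&: lower| = m./2.
      by move: (card_sym S symS) (odd_double_half m); rewrite S_mid card_M sizeS -!muln2; lia.
    exists (S :&: lower); last by rewrite -S_mid -rev_sym_decomp.
    by rewrite inE subsetIr card_S_low eqxx.
  case=> T; rewrite inE => /andP [T_low /eqP card_T] ->.
  split; last exact: rev_sym_closureU.
  by rewrite card_rev_closureU // card_T card_M addnC odd_double_half.
move=> T T'; rewrite !inE => /andP [T_low _] /andP [T'_low _] E.
by rewrite -(rev_closureUK T_low M_mid) E rev_closureUK.
Qed.

End SymmetricSubsets.

Lemma sum_rev_sym n (m a b : nat) :
  \sum_(S : {set 'I_n} | #|S| == m) (if rev_sym S then a else b) =
  alpha n m * a + ('C(n, m) - alpha n m) * b.
Proof.
have card_asym : #|[set S : {set 'I_n} | (#|S| == m) && ~~ rev_sym S]| = 'C(n, m) - alpha n m.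
  rewrite -card_rev_sym -[n in 'C(n, _)]card_ord -card_draws.
  rewrite -(cardsID [set S | rev_sym S] [set S : {set 'I_n} | #|S| == m]).
  set A := [set S : {set 'I_n} | #|S| == m].
  have -> : A :&: [set S | rev_sym S] = [set S : {set 'I_n} | (#|S| == m) && rev_sym S].
    by apply/setP => S; rewrite !inE.
  have -> : A :\: [set S | rev_sym S] = [set S : {set 'I_n} | (#|S| == m) && ~~ rev_sym S].
    by apply/setP => S; rewrite !inE andbC.
  by rewrite addKn.
rewrite (bigID (@rev_sym n)) /= -card_asym -card_rev_sym -!sum1_card !big_distrl /=.
congr (_ + _); apply: eq_big => [S | S /andP [_ symS]]; rewrite ?inE // mul1n.
  by rewrite symS.
by rewrite (negPf symS).
Qed.

Lemma card_stab_decomp n U :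
  #|[set f : rule n | stab f == U]| =
  \sum_(m < n.+1) (alpha n m * #|irr_stab m U| + ('C(n, m) - alpha n m) *
                   #|[set g : rule m | irreducible g && (stab g :&: Uc == U)]|).
Proof.
pose X m := #|[set g : rule m | irreducible g && (stab g :&: Uc == U)]|.
have by_ess : #|[set f : rule n | stab f == U]| =
    \sum_(S : {set 'I_n}) (if rev_sym S then #|irr_stab #|S| U| else X #|S|).
  rewrite -sum1_card (partition_big (@ess n) predT) //=; apply: eq_bigr => S _.
  rewrite sum1_card /X; case: ifPn => [/card_ess_stab_sym | /card_ess_stab_asym] <-;
    by apply: eq_card => f; rewrite [LHS]unfold_in !inE andbC.
have size_S (S : {set 'I_n}) : #|S| < n.+1 by rewrite ltnS -[n in _ <= n]card_ord max_card.
rewrite by_ess (partition_big (fun S : {set 'I_n} => inord #|S| : 'I_n.+1) predT) //=.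
apply: eq_bigr => m _; rewrite -sum_rev_sym.
apply: eq_big => [S | S /eqP <-]; last by rewrite inordK.
by rewrite -(inj_eq val_inj) /= inordK.
Qed.

Lemma card_tbar n U : #|tbar n U| * 4 = #|irr_stab n U| * #|U|.
Proof.
apply: card_orbits => [a f | f]; rewrite !inE; last by case/andP => _ /eqP.
by rewrite stab_act irreducible_act.
Qed.

Lemma card_t n U : #|t n U| * 4 = #|[set f : rule n | stab f == U]| * #|U|.
Proof.
apply: card_orbits => [a f | f]; rewrite !inE; last by move/eqP.
by rewrite stab_act.
Qed.

Lemma alpha_diag n : alpha n n = 1.
Proof. by rewrite /alpha; case: (odd n); rewrite ?binn. Qed.

Lemma alpha_le_binomial n m : alpha n m <= 'C(n, m).
Proof.
rewrite -card_rev_sym -[n in 'C(n, _)]card_ord -card_draws subset_leq_card //.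
by apply/subsetP => S; rewrite !inE => /andP [].
Qed.

Local Open Scope ring_scope.

Lemma card_irr_stab_rec n U :
  #|irr_stab n U|%:R = #|[set f : rule n | stab f == U]|%:R -
    \sum_(m < n) ((alpha n m)%:R * #|irr_stab m U|%:R + beta n m *
      #|[set g : rule m | irreducible g && (stab g :&: Uc == U)]|%:R) :> rat.
Proof.
rewrite card_stab_decomp natr_sum big_ord_recr /= alpha_diag binn subnn.
rewrite mul1n mul0n addn0; apply/eqP; rewrite eq_sym subr_eq addrC; apply/eqP.
congr (_ + _); apply: eq_bigr => m _.
by rewrite natrD !natrM natrB ?alpha_le_binomial.
Qed.

Lemma tbar_rec n U :
  #|tbar n U|%:R = #|t n U|%:R -
    \sum_(m < n) ((alpha n m)%:R * #|tbar m U|%:R + beta n m *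
      \sum_(V <- subgroups | V :&: Uc == U) #|U|%:R / #|V|%:R * #|tbar m V|%:R) :> rat.
Proof.
pose c : rat := #|U|%:R / 4.
have tbarE m : #|tbar m U|%:R = #|irr_stab m U|%:R * c.
  by rewrite /c mulrA -natrM -card_tbar natrM mulfK.
have tE : #|t n U|%:R = #|[set f : rule n | stab f == U]|%:R * c.
  by rewrite /c mulrA -natrM -card_t natrM mulfK.
have irrE m V : V \in subgroups ->
    #|irr_stab m V|%:R * c = #|U|%:R / #|V|%:R * #|tbar m V|%:R.
  move=> /subgroups_card_gt0; rewrite -(ltr0n rat) => V_gt0.
  have /(congr1 (fun k => k%:R : rat)) := card_tbar m V; rewrite !natrM /c => E.
  by apply: (mulIf (lt0r_neq0 V_gt0)); rewrite mulrAC -E; field; rewrite lt0r_neq0.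
rewrite tbarE tE card_irr_stab_rec mulrBl mulr_suml; congr (_ - _); apply: eq_bigr => m _.
rewrite mulrDl -!mulrA -tbarE; congr (_ + _ * _).
rewrite (card_stab_pred (@irreducible m) (fun V => V :&: Uc == U)) natr_sum mulr_suml.
by rewrite big_seq_cond [in RHS]big_seq_cond; apply: eq_bigr => V /andP [V_sub _]; exact: irrE.
Qed.

Theorem proposition6 (n : nat) :
  [/\ (#|tbar n US2|)%:R = (#|t n US2|)%:R
        - \sum_(m < n) (alpha n m)%:R * (#|tbar m US2|)%:R :> rat,
      (#|tbar n Ur|)%:R = (#|t n Ur|)%:R
        - \sum_(m < n) (alpha n m)%:R * (#|tbar m Ur|)%:R :> rat,
      (#|tbar n Urc|)%:R = (#|t n Urc|)%:R
        - \sum_(m < n) (alpha n m)%:R * (#|tbar m Urc|)%:R :> rat,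
      (#|tbar n Uc|)%:R = (#|t n Uc|)%:R
        - \sum_(m < n) (('C(n, m))%:R * (#|tbar m Uc|)%:R
                        + 2^-1 * beta n m * (#|tbar m US2|)%:R) :> rat
    & (#|tbar n U1|)%:R = (#|t n U1|)%:R
        - \sum_(m < n) (('C(n, m))%:R * (#|tbar m U1|)%:R
                        + 2^-1 * beta n m * ((#|tbar m Ur|)%:R + (#|tbar m Urc|)%:R)) :> rat].
Proof.
have [cU1 cUr cUc cUrc cUS2] := card_subgroups.
have [mU1 mUr mUc mUrc mUS2] := meet_Uc.
have [bU1 bUr bUc bUrc bUS2] := s2bits_subgroups.
split; rewrite tbar_rec; congr (_ - _); apply: eq_bigr => m _;
  rewrite /subgroups !big_cons big_nil mU1 mUr mUc mUrc mUS2 !eq_setS2;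
  rewrite ?bU1 ?bUr ?bUc ?bUrc ?bUS2 /= ?mulr0 ?addr0 // ?cU1 ?cUr ?cUc ?cUrc ?cUS2 /beta;
  by field.
Qed.
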